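(* Let $(i,k)\in\mathcal I_1$. Then $F_{\le(i,k)}F_{st}=0$ for every $(s,t)\in\mathcal I_1$ with $(s,t)\preceq(i,k)$; equivalently, $F_{<(i,k)}F_{st}=0$ for every $(s,t)\in\mathcal I_1$ with $(s,t)\prec(i,k)$.
   Context: Let $m,n\ge 1$, let $q$ be an indeterminate, and let indices range over $[1,m+n]$. Put $q_i=q$ if $i\le m$ and $q_i=q^{-1}$ if $i>m$. Let $\mathcal I_0=\{(i,j):1\le i<j\le m \text{ or } m+1\le i<j\le m+n\}$, $\mathcal I_1=\{(i,j):1\le i\le m<j\le m+n\}$. The quantum supergroup $U_q=U_q(\mathfrak{gl}(m|n))$ is the associative $\mathbb C(q)$-superalgebra generated by $K_j^{\pm1}$ ($j\in[1,m+n]$) and $E_{i,i+1},F_{i,i+1}$ ($1\le i<m+n$), where $K_j^{\pm1}$ and $E_{i,i+1},F_{i,i+1}$ for $i\ne m$ are even and $E_{m,m+1},F_{m,m+1}$ are odd, subject to: $K_iK_j=K_jK_i$, $K_iK_i^{-1}=1$; $K_iE_{j,j+1}K_i^{-1}=q_i^{\delta_{ij}-\delta_{i,j+1}}E_{j,j+1}$, $K_iF_{j,j+1}K_i^{-1}=q_i^{-(\delta_{ij}-\delta_{i,j+1})}F_{j,j+1}$; $[E_{i,i+1},F_{j,j+1}]=\delta_{ij}\frac{K_iK_{i+1}^{-1}-K_i^{-1}K_{i+1}}{q_i-q_i^{-1}}$; $E_{m,m+1}^2=F_{m,m+1}^2=0$; $E_{i,i+1}E_{j,j+1}=E_{j,j+1}E_{i,i+1}$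 and $F_{i,i+1}F_{j,j+1}=F_{j,j+1}F_{i,i+1}$ for $|i-j|>1$; for $|i-j|=1$, $i\neq m$, and $X\in\{E,F\}$: $X_{i,i+1}^2X_{j,j+1}-(q+q^{-1})X_{i,i+1}X_{j,j+1}X_{i,i+1}+X_{j,j+1}X_{i,i+1}^2=0$; and $[E_{m-1,m+2},E_{m,m+1}]=[F_{m-1,m+2},F_{m,m+1}]=0$. Here for homogeneous $x,y$, $[x,y]=xy-(-1)^{\bar x\bar y}yx$. For $i<j$ with $j>i+1$, $E_{ij}=E_{ic}E_{cj}-q_c^{-1}E_{cj}E_{ic}$ and $F_{ij}=-q_cF_{ic}F_{cj}+F_{cj}F_{ic}$ for $i<c<j$ (independent of $c$); $E_{ij},F_{ij}$ are odd iff $(i,j)\in\mathcal I_1$. Order on $\mathcal I_1$: $(i,j)\prec(s,t)$ iff $j>t$, or $j=t$ and $i<s$. For $I\subseteq\mathcal I_1$, $F_I$ is the product of the $F_{ij}$, $(i,j)\in I$, taken in increasing $\prec$-order ($F_\emptyset=1$). For $(i,j)\in\mathcal I_1$, $F_{\ge(i,j)}$, $F_{>(i,j)}$, $F_{\le(i,j)}$, $F_{<(i,j)}$ denote $F_I$ for $I=\{(s,t)\in\mathcal I_1:(s,t)\succeq(i,j)\}$, $\{(s,t):(s,t)\succ(i,j)\}$, $\{(s,t):(s,t)\preceq(i,j)\}$, $\{(s,t):(s,t)\prec(i,j)\}$ respectively. *)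

From HB Require Import structures.
From mathcomp Require Import all_boot all_order all_algebra all_field.
Set Implicit Arguments. Unset Strict Implicit. Unset Printing Implicit Defensive.
Import Order.TTheory GRing.Theory Num.Theory.
Local Open Scope ring_scope.

(* The ground field C(q): rational functions in q over the (algebraic) complex numbers. *)
Definition Cq : fieldType := {fraction {poly algC}}.
Definition qq : Cq := FracField.tofrac ('X : {poly algC}).

Definition qi (m i : nat) : Cq := if (i <= m)%N then qq else qq^-1.

Definition dlt (i j : nat) : int := if i == j then 1 else 0.

Section Gens.
Variable A : algType Cq.
Variable m : nat.

(* E_{ij}, F_{ij} for i < j, defined recursively with c = i+1:
   E_{ij} = E_{i,i+1} E_{i+1,j} - q_{i+1}^{-1} E_{i+1,j} E_{i,i+1}
   F_{ij} = - q_{i+1} F_{i,i+1} F_{i+1,j} + F_{i+1,j} F_{i,i+1}.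
   Here E i stands for E_{i,i+1}, F i for F_{i,i+1}. *)
Fixpoint Erec (E : nat -> A) (d i : nat) : A :=
  match d with
  | 0 => E i
  | d'.+1 => E i * Erec E d' i.+1 - (qi m i.+1)^-1 *: (Erec E d' i.+1 * E i)
  end.
Fixpoint Frec (F : nat -> A) (d i : nat) : A :=
  match d with
  | 0 => F i
  | d'.+1 => - (qi m i.+1 *: (F i * Frec F d' i.+1)) + Frec F d' i.+1 * F i
  end.
Definition Eij (E : nat -> A) (i j : nat) : A := Erec E (j - i).-1 i.
Definition Fij (F : nat -> A) (i j : nat) : A := Frec F (j - i).-1 i.

End Gens.

(* Defining relations of U_q(gl(m|n)) on generators K_j (K j), K_j^{-1} (Kinv j),
   E_{i,i+1} (E i), F_{i,i+1} (F i), inside an arbitrary associative C(q)-algebra A.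
   Signs of super-commutators are written out explicitly according to the parities
   (only E_{m,m+1}, F_{m,m+1}, and E_{m-1,m+2}, F_{m-1,m+2} among the elements involved are odd). *)
Definition Uq_rels (m n : nat) (A : algType Cq) (K Kinv E F : nat -> A) : Prop :=
  (forall i j, (1 <= i <= m + n)%N -> (1 <= j <= m + n)%N -> K i * K j = K j * K i) /\
  (forall i, (1 <= i <= m + n)%N -> K i * Kinv i = 1 /\ Kinv i * K i = 1) /\
  (forall i j, (1 <= i <= m + n)%N -> (1 <= j < m + n)%N ->
     K i * E j * Kinv i = (qi m i ^ (dlt i j - dlt i j.+1)) *: E j /\
     K i * F j * Kinv i = (qi m i ^ (- (dlt i j - dlt i j.+1))) *: F j) /\
  (forall i j, (1 <= i < m + n)%N -> (1 <= j < m + n)%N ->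
     (if i == j then
        (if i == m then E i * F j + F j * E i else E i * F j - F j * E i)
        = (qi m i - (qi m i)^-1)^-1 *: (K i * Kinv i.+1 - Kinv i * K i.+1)
      else E i * F j - F j * E i = 0)) /\
  E m * E m = 0 /\ F m * F m = 0 /\
  (forall i j, (1 <= i < m + n)%N -> (1 <= j < m + n)%N -> (i.+1 < j)%N \/ (j.+1 < i)%N ->
     E i * E j = E j * E i /\ F i * F j = F j * F i) /\
  (forall i j, (1 <= i < m + n)%N -> (1 <= j < m + n)%N -> (j == i.+1) || (i == j.+1) ->
     i != m ->
     E i * E i * E j - (qq + qq^-1) *: (E i * E j * E i) + E j * (E i * E i) = 0 /\
     F i * F i * F j - (qq + qq^-1) *: (F i * F j * F i) + F j * (F i * F i) = 0) /\
  (* [E_{m-1,m+2}, E_{m,m+1}] = [F_{m-1,m+2}, F_{m,m+1}] = 0 (both odd: anticommutator),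
     meaningful when m >= 2 and n >= 2 *)
  ((2 <= m)%N -> (2 <= n)%N ->
     Eij m E m.-1 (m + 2) * E m + E m * Eij m E m.-1 (m + 2) = 0 /\
     Fij m F m.-1 (m + 2) * F m + F m * Fij m F m.-1 (m + 2) = 0).

Definition inI1 (m n : nat) (p : nat * nat) : bool :=
  [&& (1 <= p.1)%N, (p.1 <= m)%N, (m < p.2)%N & (p.2 <= m + n)%N].

Definition precb (p r : nat * nat) : bool :=
  (r.2 < p.2)%N || ((p.2 == r.2) && (p.1 < r.1)%N).
Definition preceqb (p r : nat * nat) : bool := precb p r || (p == r).

(* I_1 listed in increasing order: t from m+n down to m+1, then s from 1 to m *)
Definition I1seq (m n : nat) : seq (nat * nat) :=
  flatten [seq [seq (s, t) | s <- iota 1 m] | t <- rev (iota m.+1 n)].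

Definition Fle (m n : nat) (A : algType Cq) (F : nat -> A) (p : nat * nat) : A :=
  \prod_(r <- I1seq m n | preceqb r p) Fij m F r.1 r.2.
Definition Flt (m n : nat) (A : algType Cq) (F : nat -> A) (p : nat * nat) : A :=
  \prod_(r <- I1seq m n | precb r p) Fij m F r.1 r.2.

From HB Require Import structures.
From mathcomp Require Import all_boot all_order all_algebra all_field.
From mathcomp Require Import ring zify.
Import GRing.Theory.
Local Open Scope ring_scope.

Set Implicit Arguments. Unset Strict Implicit. Unset Printing Implicit Defensive.

(* The odd root vectors F_st, (s,t) in I_1, satisfy F_st^2 = 0; two of them in
   the same row or column q-commute with factor -q, and two "crossing" ones
   (i < s, k < t) anticommute. These follow from the Serre relations through
   identities between q-commutators [x, y]_c = x y - c y x. With them, for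
   (s,t) <= (i,k) the product F_ik F_st is a combination of products whose first
   factor is some F_s't' with (s',t') < (i,k). So if y F_s't' = 0 for all
   (s',t') < (i,k) then y F_ik F_st = 0, and induction along the ordered product
   gives F_<(i,k) F_st = 0 for (s,t) < (i,k), hence the claim since
   F_<=(i,k) = F_<(i,k) F_ik. *)

Section LinearCombination.
Variables (K : fieldType) (V : lmodType K).

Definition lincomb (s : seq V) (k : nat -> K) : V := \sum_(i < size s) k i *: s`_i.

Lemma lincombD s k l : lincomb s k + lincomb s l = lincomb s (fun i => k i + l i).
Proof. by rewrite /lincomb -big_split; apply: eq_bigr => i _; rewrite scalerDl. Qed.

Lemma lincombN s k : - lincomb s k = lincomb s (fun i => - k i).
Proof. by rewrite /lincomb -sumrN; apply: eq_bigr => i _; rewrite scaleNr. Qed.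

Lemma lincombZ s c k : c *: lincomb s k = lincomb s (fun i => c * k i).
Proof. by rewrite /lincomb scaler_sumr; apply: eq_bigr => i _; rewrite scalerA. Qed.

Lemma lincomb_nth s j : (j < size s)%N -> s`_j = lincomb s (fun i => (i == j)%:R).
Proof.
move=> lt_js; rewrite /lincomb (bigD1 (Ordinal lt_js)) //= eqxx scale1r big1 ?addr0 //.
by move=> i /negPf; rewrite -val_eqE /= => ->; rewrite scale0r.
Qed.

Lemma lincomb_eq s k l : (forall i, (i < size s)%N -> k i = l i) -> lincomb s k = lincomb s l.
Proof. by move=> eq_kl; apply: eq_bigr => i _; rewrite eq_kl. Qed.

End LinearCombination.
Arguments lincomb {K V} s k : simpl never.
Arguments lincomb_nth {K V} s j.

Ltac expand_monomials := repeat progress rewrite ?mulrDl ?mulrDr ?mulrBl ?mulrBr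
  ?mulNr ?mulrN -?scalerAl -?scalerAr ?mulrA ?scalerN ?scalerBr ?scalerDr ?scalerA.

(* [ring] needs commutativity, so an identity in an algebra is checked by
   expanding it into left-associated monomials ([expand_monomials]), writing
   these as combinations of the monomials listed in [lincomb_solve], and
   comparing coefficients with [field], whose side conditions must be
   hypotheses. *)
Ltac lincomb_atoms s v j := lazymatch v with
  | nil => idtac
  | ?M :: ?v' => rewrite [M](lincomb_nth s j) //; lincomb_atoms s v' (S j)
  end.

Ltac lincomb_coeffs :=
  first [ by move=> ? /[!ltnS]/[!ltn0]
        | case; [move=> _; cbv beta; rewrite /=; by field | lincomb_coeffs] ].

Ltac lincomb_solve l :=
  let s := fresh "s" in pose s := l;
  lincomb_atoms s l 0%N;
  repeat progress rewrite ?lincombZ ?lincombN ?lincombD;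
  apply: lincomb_eq; rewrite /s /=; lincomb_coeffs.

Section QCommutator.
Variables (K : fieldType) (A : algType K).
Implicit Types (a b c q : K) (f u v w x y z : A).

Definition qcomm c x y : A := x * y - c *: (y * x).
Definition serre c x y : A := x * x * y - (c + c^-1) *: (x * y * x) + y * (x * x).

Lemma serreV c x y : serre c^-1 x y = serre c x y.
Proof. by rewrite /serre invrK (addrC c^-1). Qed.

Lemma mulrA_rel x y z : x * y = z -> forall g, g * x * y = g * z.
Proof. by move=> xyz g; rewrite -mulrA xyz. Qed.

Lemma qcommute_sym a x y : a != 0 -> x * y = a *: (y * x) -> y * x = a^-1 *: (x * y).
Proof. by move=> a_neq0 ->; rewrite scalerA mulVf // scale1r. Qed.

Lemma qcommute_qcomm a b c f x y :
  f * x = a *: (x * f) -> f * y = b *: (y * f) ->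
  f * qcomm c x y = (a * b) *: (qcomm c x y * f).
Proof.
move=> fx fy; rewrite /qcomm; expand_monomials.
rewrite fx fy; expand_monomials; rewrite ?(mulrA_rel fx) ?(mulrA_rel fy); expand_monomials.
by lincomb_solve [:: x * y * f; y * x * f].
Qed.

Lemma comm_qcomm c f x y : f * x = x * f -> f * y = y * f ->
  f * qcomm c x y = qcomm c x y * f.
Proof.
by move=> fx fy; have := @qcommute_qcomm 1 1 c f x y; rewrite mulr1 !scale1r; apply.
Qed.

Lemma anticomm_qcommr c f x y : f * x = x * f -> f * y = - (y * f) ->
  f * qcomm c x y = - (qcomm c x y * f).
Proof.
move=> fx fy; have := @qcommute_qcomm 1 (-1) c f x y.
by rewrite mul1r !scale1r !scaleN1r; apply.
Qed.

Lemma anticomm_qcomml c f x y : f * x = - (x * f) -> f * y = y * f ->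
  f * qcomm c x y = - (qcomm c x y * f).
Proof.
move=> fx fy; have := @qcommute_qcomm (-1) 1 c f x y.
by rewrite mulr1 !scale1r !scaleN1r; apply.
Qed.

Lemma anticommC x y : x * y = - (y * x) -> y * x = - (x * y).
Proof. by move->; rewrite opprK. Qed.

Lemma qcomm_assoc c c' f x y : f * x = x * f ->
  qcomm c' (qcomm c x y) f = qcomm c x (qcomm c' y f).
Proof.
move=> fx; rewrite /qcomm; expand_monomials; rewrite fx ?(mulrA_rel fx); expand_monomials.
by lincomb_solve [:: x * y * f; y * x * f; x * f * y; f * y * x].
Qed.

Lemma nil_qcomml c x y : x * x = 0 -> x * qcomm c x y = (- c) *: (qcomm c x y * x).
Proof.
move=> xx0; rewrite /qcomm; expand_monomials; rewrite xx0 (mulrA_rel xx0).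
by rewrite !(mulr0, mul0r, scaler0, oppr0, subr0, sub0r, scaleNr).
Qed.

Lemma nil_qcommr c x y : x * x = 0 -> qcomm c y x * x = (- c) *: (x * qcomm c y x).
Proof.
move=> xx0; rewrite /qcomm; expand_monomials; rewrite xx0 (mulrA_rel xx0).
by rewrite !(mulr0, mul0r, scaler0, oppr0, subr0, sub0r, scaleNr).
Qed.

Lemma qcomm_sqr0 a b c x y : 1 - a * b != 0 ->
  x * qcomm c x y = a *: (qcomm c x y * x) -> y * qcomm c x y = b *: (qcomm c x y * y) ->
  qcomm c x y * qcomm c x y = 0.
Proof.
set z := qcomm c x y => ab_neq1 xz yz.
have zz : z * z = (a * b) *: (z * z).
  have {1}-> : z * z = x * (y * z) - c *: (y * (x * z)).
    by rewrite {1}/z /qcomm mulrBl -scalerAl !mulrA.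
  rewrite xz yz -!scalerAr !mulrA xz yz -!scalerAl !scalerA -!mulrA.
  rewrite {4}/z /qcomm mulrBr -scalerAr scalerBr scalerA !mulrA.
  by congr (_ *: _ - _ *: _); ring.
have : (1 - a * b) *: (z * z) = 0 by rewrite scalerBl -zz scale1r subrr.
by move/eqP; rewrite scaler_eq0 (negPf ab_neq1) => /eqP.
Qed.

Lemma serre_qcommutel c x y : c != 0 -> serre c x y = 0 ->
  x * qcomm c y x = c *: (qcomm c y x * x).
Proof.
move=> c_neq0 sxy; apply/eqP; rewrite -subr_eq0; apply/eqP.
rewrite -[RHS](scaler0 _ (- c)) -sxy /serre /qcomm; expand_monomials.
by lincomb_solve [:: x * y * x; x * x * y; y * x * x].
Qed.

Lemma serre_qcommuter c x y : c != 0 -> serre c x y = 0 ->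
  x * qcomm c x y = c^-1 *: (qcomm c x y * x).
Proof.
move=> c_neq0 sxy; apply/eqP; rewrite -subr_eq0; apply/eqP.
rewrite -[RHS](scaler0 _ 1) -sxy /serre /qcomm; expand_monomials.
by lincomb_solve [:: x * y * x; x * x * y; y * x * x].
Qed.

Lemma serre_comm_qcomm2 c x y z : c != 0 -> 1 + c ^+ 2 != 0 ->
  serre c x y = 0 -> serre c x z = 0 -> y * z = z * y ->
  x * qcomm c (qcomm c z x) y = qcomm c (qcomm c z x) y * x.
Proof.
set t := qcomm c (qcomm c z x) y => c_neq0 c2_neq0 sxy sxz yz.
have key : (1 + c ^+ 2) *: (x * t - t * x) =
  c *: (z * serre c x y - c ^+ 2 *: (serre c x y * z) + c ^+ 2 *: (y * serre c x z)
   - serre c x z * y + c ^+ 2 *: (x * x * (y * z - z * y))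
   - (1 + c ^+ 2) *: (x * (y * z - z * y) * x) + (y * z - z * y) * x * x).
  rewrite /t /serre /qcomm; expand_monomials.
  by lincomb_solve [:: y * x * x * z; y * x * z * x; y * z * x * x; x * y * x * z;
    x * y * z * x; x * x * y * z; x * x * z * y; x * z * y * x; x * z * x * y;
    z * y * x * x; z * x * y * x; z * x * x * y].
move: key; rewrite sxy sxz yz subrr !(mulr0, mul0r, scaler0, subr0, addr0) => /eqP.
by rewrite scaler_eq0 (negPf c2_neq0) /= subr_eq0 => /eqP.
Qed.

Lemma qcomm_expandl q x u w : x * u = (- q) *: (u * x) ->
  x * qcomm q u w =
  (- q) *: (u * qcomm q x w) - q *: (qcomm q x w * u) - q ^+ 2 *: (qcomm q u w * x).
Proof.
move=> xu; rewrite /qcomm; expand_monomials; rewrite xu ?(mulrA_rel xu); expand_monomials.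
by lincomb_solve [:: u * x * w; x * w * u; u * w * x; w * u * x].
Qed.

Lemma qcomm_expandr q u v w : q != 0 ->
  u * v = (- q) *: (v * u) -> u * qcomm q v w = - (qcomm q v w * u) ->
  qcomm q u w * v = - (v * qcomm q u w) + (q^-1 - q) *: (qcomm q v w * u).
Proof.
(* [t] stays opaque, so that [ut] can be used as a rewrite rule. *)
move=> q_neq0 uv; have [t t_def] : {t | qcomm q v w = t} by exists (qcomm q v w).
rewrite t_def => ut; have wv : w * v = q^-1 *: (v * w - t).
  by rewrite -t_def /qcomm; expand_monomials; lincomb_solve [:: w * v; v * w].
rewrite /qcomm; expand_monomials.
do 3 (rewrite ?(mulrA_rel wv) ?(mulrA_rel uv) ?wv ?uv ?ut; expand_monomials).
by lincomb_solve [:: v * u * w; v * w * u; t * u].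
Qed.

End QCommutator.

Lemma mem_split (T : eqType) (s : seq T) p : p \in s -> exists s1 s2, s = s1 ++ p :: s2.
Proof. by case/splitPr=> s1 s2; exists s1, s2. Qed.

Section OrderedProducts.
Variables (T : eqType) (R : pzSemiRingType) (lt : rel T) (x : T -> R).
Hypothesis lt_asym : forall a b, lt a b -> ~~ lt b a.

Definition annihilation_step (s : seq T) := forall p r, p \in s -> r \in s ->
  lt r p || (r == p) ->
  forall y, (forall r', r' \in s -> lt r' p -> y * x r' = 0) -> y * x p * x r = 0.

Lemma lt_irr a : lt a a = false.
Proof. by apply/negbTE/negP => laa; move/negP: (lt_asym laa). Qed.

Lemma pairwise_mid s1 p s2 : pairwise lt (s1 ++ p :: s2) ->
  (forall r, r \in s1 -> lt r p) /\ (forall r, r \in s2 -> lt p r).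
Proof.
rewrite pairwise_cat pairwise_cons allrel_consr.
by case/and3P=> /andP[/allP lt_s1p _] _ /andP[/allP lt_ps2 _].
Qed.

Variable s : seq T.
Hypotheses (s_sorted : pairwise lt s) (s_step : annihilation_step s).

Lemma prefix_prod_annihilates s1 s2 : s = s1 ++ s2 ->
  {in s1, forall r, (\prod_(r' <- s1) x r') * x r = 0}.
Proof.
elim/last_ind: s1 s2 => [//|s1 z IH] s2 s_def r.
have {}s_def : s = s1 ++ z :: s2 by rewrite s_def cat_rcons.
have /pairwise_mid[lt_s1z lt_zs2] : pairwise lt (s1 ++ z :: s2) by rewrite -s_def.
rewrite big_rcons mem_rcons in_cons => r_in; apply: s_step.
- by rewrite s_def mem_cat in_cons eqxx orbT.
- by rewrite s_def mem_cat in_cons; case/orP: r_in => ->; rewrite ?orbT.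
- by case/orP: r_in => [->|/lt_s1z ->]; rewrite ?orbT.
move=> r'; rewrite s_def mem_cat in_cons => /or3P[r'_s1|/eqP->|/lt_zs2 lt_zr'] lt_r'z.
- exact: IH s_def r' r'_s1.
- by rewrite lt_irr in lt_r'z.
- by move/negP: (lt_asym lt_zr').
Qed.

Lemma prod_lt_annihilates p r : p \in s -> r \in s -> lt r p ->
  (\prod_(r' <- s | lt r' p) x r') * x r = 0.
Proof.
case/mem_split=> s1 [s2 s_def] r_in lt_rp.
have /pairwise_mid[lt_s1p lt_ps2] : pairwise lt (s1 ++ p :: s2) by rewrite -s_def.
rewrite s_def big_cat big_cons lt_irr (big1_seq s2) ?Monoid.mulm1; last first.
  by move=> r' /andP[lt_r'p r'_s2]; move: (lt_asym (lt_ps2 r' r'_s2)); rewrite lt_r'p.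
rewrite -big_filter (all_filterP _); last exact/allP.
apply: (prefix_prod_annihilates s_def).
move: r_in; rewrite s_def mem_cat in_cons => /or3P[//|/eqP r_p|/lt_ps2 /lt_asym].
  by rewrite r_p lt_irr in lt_rp.
by rewrite lt_rp.
Qed.

Lemma prod_le_annihilates p r : p \in s -> r \in s -> lt r p || (r == p) ->
  (\prod_(r' <- s | lt r' p || (r' == p)) x r') * x r = 0.
Proof.
case/mem_split=> s1 [s2 s_def] r_in le_rp.
have /pairwise_mid[lt_s1p lt_ps2] : pairwise lt (s1 ++ p :: s2) by rewrite -s_def.
have lt_neq r' : lt p r' -> r' != p by apply: contraTneq => ->; rewrite lt_irr.
rewrite s_def big_cat big_cons lt_irr eqxx (big1_seq s2) ?Monoid.mulm1; last first.
  move=> r' /andP[le_r'p /lt_ps2 lt_pr']; move: le_r'p.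
  by rewrite (negPf (lt_asym lt_pr')) (negPf (lt_neq _ lt_pr')).
rewrite -big_filter (all_filterP _); last by apply/allP => r' /lt_s1p ->.
rewrite orbT -[X in X * x r](big_rcons _ p s1 xpredT).
apply: (prefix_prod_annihilates (s2 := s2)); first by rewrite cat_rcons.
rewrite mem_rcons in_cons; case/orP: le_rp => [|->//].
move: r_in; rewrite s_def mem_cat in_cons => /or3P[->|->|/lt_ps2 lt_pr]; rewrite ?orbT //.
by rewrite (negPf (lt_asym lt_pr)).
Qed.

End OrderedProducts.

Lemma sqrD1V_neq0 (K : fieldType) (x : K) : x != 0 -> 1 + x ^+ 2 != 0 -> 1 + x^-1 ^+ 2 != 0.
Proof.
move=> x_neq0 x2_neq0; have -> : 1 + x^-1 ^+ 2 = x^-1 ^+ 2 * (1 + x ^+ 2) by field.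
by rewrite mulf_neq0 // expf_neq0 // invr_neq0.
Qed.

Lemma qq_neq0 : qq != 0.
Proof. by rewrite /qq -tofrac0 tofrac_eq polyX_eq0. Qed.

Lemma qq_sqrD1_neq0 : 1 + qq ^+ 2 != 0.
Proof.
rewrite /qq -tofrac1 -tofracXn -tofracD -tofrac0 tofrac_eq.
apply/negP => /eqP /(congr1 (horner^~ 0)).
by rewrite hornerD hornerC hornerXn expr0n /= addr0 horner0 => /eqP; rewrite oner_eq0.
Qed.

Lemma qi_le m i : (i <= m)%N -> qi m i = qq.
Proof. by rewrite /qi => ->. Qed.

Lemma qi_gt m i : (m < i)%N -> qi m i = qq^-1.
Proof. by rewrite /qi ltnNge => /negPf ->. Qed.

Lemma qiS m i : i != m -> qi m i.+1 = qi m i.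
Proof.
move=> neq_im; rewrite /qi; have [le_im|lt_mi] := leqP i m.
  by rewrite ltn_neqAle neq_im le_im.
by rewrite ltnNge ltnW.
Qed.

Lemma qi_neq0 m i : qi m i != 0.
Proof. by rewrite /qi; case: leqP; rewrite ?invr_eq0 qq_neq0. Qed.

Lemma qi_sqrD1_neq0 m i : 1 + qi m i ^+ 2 != 0.
Proof.
rewrite /qi; case: leqP => _; first exact: qq_sqrD1_neq0.
exact: sqrD1V_neq0 qq_neq0 qq_sqrD1_neq0.
Qed.

Lemma precb_asym a b : precb a b -> ~~ precb b a.
Proof. by case: a b => [a1 a2] [b1 b2]; rewrite /precb /=; lia. Qed.

Lemma mem_I1seq m n p : (p \in I1seq m n) = inI1 m n p.
Proof.
case: p => s t; rewrite /I1seq /inI1 /=; apply/flatten_mapP/idP.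
  by case=> t'; rewrite mem_rev mem_iota => t'_range /mapP[s' + [-> ->]]; rewrite mem_iota; lia.
move=> st_in; exists t; first by rewrite mem_rev mem_iota; lia.
by apply/mapP; exists s => //; rewrite mem_iota; lia.
Qed.

Lemma I1seqS m n : I1seq m n.+1 = [seq (s, (m.+1 + n)%N) | s <- iota 1 m] ++ I1seq m n.
Proof. by rewrite /I1seq -[n.+1]addn1 iotaD rev_cat. Qed.

Lemma pairwise_I1seq m n : pairwise precb (I1seq m n).
Proof.
elim: n => [//|n IH]; rewrite I1seqS pairwise_cat IH andbT; apply/andP; split.
  apply/allrelP => a b /mapP[s _ ->]; rewrite mem_I1seq /inI1 /precb /=.
  by case: b => s' t' /=; lia.
rewrite pairwise_map; apply: (@sub_pairwise _ ltn); last first.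
  by rewrite -sorted_pairwise ?iota_ltn_sorted //; exact: ltn_trans.
by move=> a b; rewrite /relpre /precb /= ltnn eqxx.
Qed.

Section RootVectors.
Variables (m n : nat) (A : algType Cq) (F : nat -> A).
Hypothesis F_comm_far : forall i j, (1 <= i < m + n)%N -> (1 <= j < m + n)%N ->
  (i.+1 < j)%N \/ (j.+1 < i)%N -> F i * F j = F j * F i.
Hypothesis F_serre : forall i j, (1 <= i < m + n)%N -> (1 <= j < m + n)%N ->
  (j == i.+1) || (i == j.+1) -> i != m -> serre qq (F i) (F j) = 0.
Hypothesis m_ge1 : (1 <= m)%N.
Hypothesis F_odd_sqr0 : F m * F m = 0.
Hypothesis F_quartic : (2 <= m)%N -> (2 <= n)%N ->
  Fij m F m.-1 (m + 2) * F m + F m * Fij m F m.-1 (m + 2) = 0.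

Local Notation Fr := (Frec m F).
Local Notation F_ := (Fij m F).

Lemma FrecS d a : Fr d.+1 a = qcomm (qi m a.+1) (Fr d a.+1) (F a).
Proof. by rewrite /= addrC. Qed.

Lemma Fij1 a : F_ a a.+1 = F a.
Proof. by rewrite /Fij subSnn. Qed.

Lemma serre_qi i j : (1 <= i < m + n)%N -> (1 <= j < m + n)%N ->
  (j == i.+1) || (i == j.+1) -> i != m -> serre (qi m i) (F i) (F j) = 0.
Proof. by move=> *; rewrite /qi; case: ifP => _; rewrite ?serreV F_serre. Qed.

Lemma F_Frec_comm_far d a j : (1 <= a)%N -> (a + d < m + n)%N -> (1 <= j < m + n)%N ->
  (j.+1 < a)%N || (a + d.+1 < j)%N -> F j * Fr d a = Fr d a * F j.
Proof.
elim: d a => [|d IH] a a_ge1 ad_lt j_range j_far.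
  by apply: F_comm_far => //; lia.
rewrite FrecS comm_qcomm ?IH //; try lia.
by apply: F_comm_far => //; lia.
Qed.

Lemma F_Fij_comm_far a b j : (1 <= a < b)%N -> (b <= m + n)%N -> (1 <= j < m + n)%N ->
  (j.+1 < a)%N || (b < j)%N -> F j * F_ a b = F_ a b * F j.
Proof. by move=> *; apply: F_Frec_comm_far; lia. Qed.

Lemma Frec_split d e a : (1 <= a)%N -> (a + d + e.+1 < m + n)%N ->
  Fr (d + e).+1 a = qcomm (qi m (a + d).+1) (Fr e (a + d).+1) (Fr d a).
Proof.
elim: d a => [|d IH] a a_ge1 ade_lt; first by rewrite add0n addn0 FrecS.
rewrite addSn FrecS (IH a.+1) ?addSn ?addnS; try lia.
by rewrite [Fr d.+1 a]FrecS qcomm_assoc //; apply: F_Frec_comm_far; lia.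
Qed.

Lemma Fij_split a c b : (1 <= a)%N -> (a < c < b)%N -> (b <= m + n)%N ->
  F_ a b = qcomm (qi m c) (F_ c b) (F_ a c).
Proof.
move=> a_ge1 acb b_le; rewrite /Fij.
have -> : (b - a).-1 = ((c - a).-1 + (b - c).-1).+1 by lia.
by rewrite Frec_split; [congr (qcomm (qi m _) (Fr _ _) _)|..]; lia.
Qed.

Lemma Frec_comm (X : A) d c : (forall j, (c <= j <= c + d)%N -> F j * X = X * F j) ->
  Fr d c * X = X * Fr d c.
Proof.
elim: d c => [|d IH] c FX; first by rewrite /= FX ?addn0 ?leqnn.
rewrite FrecS; apply/esym/comm_qcomm; last by rewrite FX //; lia.
by rewrite IH // => j j_range; apply: FX; lia.
Qed.

Lemma Fij_disjoint_comm a b c d : (1 <= a < b)%N -> (b < c < d)%N -> (d <= m + n)%N ->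
  F_ c d * F_ a b = F_ a b * F_ c d.
Proof. by move=> *; apply: Frec_comm => j j_range; apply: F_Fij_comm_far; lia. Qed.

Lemma F_Fij_qcommutel s t : (1 <= s)%N -> (s.+1 < t <= m + n)%N -> s != m ->
  F s * F_ s t = qi m s *: (F_ s t * F s).
Proof.
move=> s_ge1 t_range s_neq_m.
have base : F s * F_ s s.+2 = qi m s *: (F_ s s.+2 * F s).
  rewrite (@Fij_split s s.+1 s.+2) ?Fij1 ?(qiS s_neq_m); try lia.
  by apply: serre_qcommutel; rewrite ?qi_neq0 ?serre_qi //; lia.
have [->|t_neq] := eqVneq t s.+2; first exact: base.
rewrite (@Fij_split s s.+2 t) //; try lia.
rewrite -[qi m s]mul1r; apply: qcommute_qcomm base.
by rewrite scale1r; apply: F_Fij_comm_far; lia.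
Qed.

Lemma F_Fij_qcommuter a t : (1 <= a < t)%N -> (t < m + n)%N -> t != m ->
  F t * F_ a t.+1 = (qi m t)^-1 *: (F_ a t.+1 * F t).
Proof.
move=> a_range t_lt t_neq_m.
have base : F t * F_ t.-1 t.+1 = (qi m t)^-1 *: (F_ t.-1 t.+1 * F t).
  have [u t_def] : exists u, t = u.+1 by exists t.-1; lia.
  rewrite t_def /= in t_neq_m *; rewrite (@Fij_split u u.+1 u.+2) ?Fij1; try lia.
  by apply: serre_qcommuter; rewrite ?qi_neq0 ?serre_qi //; lia.
have [a_eq|a_neq] := eqVneq a t.-1; first by rewrite a_eq base.
rewrite (@Fij_split a t.-1 t.+1) //; try lia.
rewrite -[_^-1]mulr1; apply: qcommute_qcomm base _.
by rewrite scale1r; apply: F_Fij_comm_far; lia.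
Qed.

Lemma Fij_row_qcommute i k t : (1 <= i < k)%N -> (m < k < t)%N -> (t <= m + n)%N ->
  F_ i k * F_ i k = 0 -> F_ i k * F_ i t = (- qq) *: (F_ i t * F_ i k).
Proof.
move=> i_range kt t_le sqr0; rewrite (@Fij_split i k t) ?qi_gt; try lia.
have qq'_neq0 : - qq^-1 != 0 by rewrite oppr_eq0 invr_eq0 qq_neq0.
by move: (nil_qcommr qq^-1 (F_ k t) sqr0) => /(qcommute_sym qq'_neq0); rewrite invrN invrK.
Qed.

Lemma Fij_col_qcommute s i k : (1 <= s < i)%N -> (i <= m)%N -> (i < k <= m + n)%N ->
  F_ i k * F_ i k = 0 -> F_ i k * F_ s k = (- qq) *: (F_ s k * F_ i k).
Proof.
move=> s_range i_le k_range sqr0; rewrite (@Fij_split s i k) ?qi_le; try lia.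
exact: nil_qcomml.
Qed.

Lemma Fij_sqr0_m t : (m < t <= m + n)%N -> F_ m t * F_ m t = 0.
Proof.
elim: t => [|t IH] t_range; first by lia.
have [->|t_neq_m] := eqVneq t m; first by rewrite Fij1.
have FZ : F t * F_ m t.+1 = qq *: (F_ m t.+1 * F t).
  by rewrite F_Fij_qcommuter ?qi_gt ?invrK //; lia.
have PZ : F_ m t * F_ m t.+1 = (- qq) *: (F_ m t.+1 * F_ m t).
  by apply: Fij_row_qcommute; rewrite ?IH //; lia.
rewrite (@Fij_split m t t.+1) ?Fij1 ?qi_gt in FZ PZ *; try lia.
apply: (qcomm_sqr0 _ FZ PZ).
by rewrite mulrN opprK -expr2 qq_sqrD1_neq0.
Qed.

Lemma Fij_sqr0 s t : (1 <= s <= m)%N -> (m < t <= m + n)%N -> F_ s t * F_ s t = 0.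
Proof.
move=> /andP[s_ge1 s_le] t_range; have [d d_def] : exists d, (m - s)%N = d by eexists.
elim: d s d_def s_ge1 s_le => [|d IH] s d_def s_ge1 s_le.
  by rewrite (_ : s = m); [exact: Fij_sqr0_m | lia].
have FZ : F s * F_ s t = qq *: (F_ s t * F s).
  by rewrite F_Fij_qcommutel ?qi_le //; lia.
have PZ : F_ s.+1 t * F_ s t = (- qq) *: (F_ s t * F_ s.+1 t).
  by apply: Fij_col_qcommute; rewrite ?IH //; lia.
rewrite (@Fij_split s s.+1 t) ?Fij1 ?qi_le in FZ PZ *; try lia.
apply: (qcomm_sqr0 _ PZ FZ).
by rewrite mulNr opprK -expr2 qq_sqrD1_neq0.
Qed.

Lemma F_Fij_comm_inner j a b : (1 <= a < j)%N -> (j.+1 < b <= m + n)%N -> j != m ->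
  F j * F_ a b = F_ a b * F j.
Proof.
move=> a_range b_range j_neq_m.
have base : F j * F_ j.-1 j.+2 = F_ j.-1 j.+2 * F j.
  have [u j_def] : exists u, j = u.+1 by exists j.-1; lia.
  rewrite j_def /= in j_neq_m *.
  rewrite (@Fij_split u u.+1 u.+3) 1?(@Fij_split u.+1 u.+2 u.+3) ?Fij1 ?(qiS j_neq_m); try lia.
  apply: serre_comm_qcomm2; rewrite ?qi_neq0 ?qi_sqrD1_neq0 ?serre_qi //; try lia.
  by apply: F_comm_far; lia.
have right b' : (j.+1 < b' <= m + n)%N -> F j * F_ j.-1 b' = F_ j.-1 b' * F j.
  move=> b'_range; have [->|b'_neq] := eqVneq b' j.+2; first exact: base.
  rewrite (@Fij_split j.-1 j.+2 b') //; try lia.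
  by apply: comm_qcomm base; apply: F_Fij_comm_far; lia.
have [->|a_neq] := eqVneq a j.-1; first exact: right.
rewrite (@Fij_split a j.-1 b) //; try lia.
by apply: comm_qcomm; [exact: right | apply: F_Fij_comm_far; lia].
Qed.

Lemma Fij_cross_extend s k i t : (2 <= s <= m)%N -> (m < k)%N -> (k < t <= m + n)%N ->
  (1 <= i < s)%N -> F_ s k * F_ s.-1 k.+1 = - (F_ s.-1 k.+1 * F_ s k) ->
  F_ s k * F_ i t = - (F_ i t * F_ s k).
Proof.
move=> s_range k_gt t_range i_range adj.
have left : F_ s k * F_ i k.+1 = - (F_ i k.+1 * F_ s k).
  have [->|i_neq] := eqVneq i s.-1; first exact: adj.
  rewrite (@Fij_split i s.-1 k.+1) //; try lia.
  by apply: anticomm_qcomml adj _; apply: Fij_disjoint_comm; lia.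
have [->|t_neq] := eqVneq t k.+1; first exact: left.
rewrite (@Fij_split i k.+1 t) //; try lia.
by apply: anticomm_qcommr left; apply/esym/Fij_disjoint_comm; lia.
Qed.

Lemma Fij_cross_adjacent_m k : (2 <= m)%N -> (m < k < m + n)%N ->
  F_ m k * F_ m.-1 k.+1 = - (F_ m.-1 k.+1 * F_ m k).
Proof.
move=> m_ge2; elim: k => [|k IH] k_range; first by lia.
have [->|k_neq_m] := eqVneq k m.
  apply/eqP; rewrite Fij1 -addn2 -addr_eq0 addrC F_quartic //; lia.
have XF : F_ m.-1 k.+2 * F k = F k * F_ m.-1 k.+2.
  by apply/esym/F_Fij_comm_inner; lia.
have XP : F_ m.-1 k.+2 * F_ m k = - (F_ m k * F_ m.-1 k.+2).
  by apply/anticommC/Fij_cross_extend; rewrite ?IH //; lia.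
rewrite (@Fij_split m k k.+1) ?Fij1 //; try lia.
by apply/anticommC; apply: anticomm_qcommr XF XP.
Qed.

Lemma Fij_cross_adjacent s k : (2 <= s <= m)%N -> (m < k < m + n)%N ->
  F_ s k * F_ s.-1 k.+1 = - (F_ s.-1 k.+1 * F_ s k).
Proof.
move=> /andP[s_ge2 s_le] k_range; have [d d_def] : exists d, (m - s)%N = d by eexists.
elim: d s d_def s_ge2 s_le => [|d IH] s d_def s_ge2 s_le.
  by rewrite (_ : s = m); [apply: Fij_cross_adjacent_m | ]; lia.
have XF : F_ s.-1 k.+1 * F s = F s * F_ s.-1 k.+1.
  by apply/esym/F_Fij_comm_inner; lia.
have XP : F_ s.-1 k.+1 * F_ s.+1 k = - (F_ s.+1 k * F_ s.-1 k.+1).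
  by apply/anticommC/Fij_cross_extend; rewrite ?IH //; lia.
rewrite (@Fij_split s s.+1 k) ?Fij1 //; try lia.
by apply/anticommC; apply: anticomm_qcomml XP XF.
Qed.

Lemma Fij_cross_anticomm s k i t : (1 <= i < s)%N -> (s <= m < k)%N -> (k < t <= m + n)%N ->
  F_ s k * F_ i t = - (F_ i t * F_ s k).
Proof. by move=> *; apply: Fij_cross_extend; rewrite ?Fij_cross_adjacent //; lia. Qed.

Lemma Fij_annihilation_step i k s t (y : A) : inI1 m n (i, k) -> inI1 m n (s, t) ->
  preceqb (s, t) (i, k) ->
  (forall s' t', inI1 m n (s', t') -> precb (s', t') (i, k) -> y * F_ s' t' = 0) ->
  y * F_ i k * F_ s t = 0.
Proof.
rewrite /inI1 /preceqb /precb /= xpair_eqE.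
move=> /and4P[i_ge1 i_le k_gt k_le] /and4P[s_ge1 s_le t_gt t_le] st_le y_kills.
have kill s' t' z : (1 <= s' <= m)%N -> (m < t' <= m + n)%N ->
    (k < t')%N || (t' == k) && (s' < i)%N -> y * (F_ s' t' * z) = 0.
  move=> s'_range t'_range st'_lt; rewrite mulrA y_kills ?mul0r //.
  by rewrite /inI1 /=; apply/and4P; split; lia.
rewrite -mulrA; have [k_lt_t|t_le_k] := ltnP k t; last first.
  have -> : t = k by lia.
  have [<-|s_neq_i] := eqVneq s i; first by rewrite Fij_sqr0 ?mulr0 //; lia.
  by rewrite Fij_col_qcommute ?Fij_sqr0 -?scalerAr ?kill ?scaler0 //; lia.
have [s_lt_i|i_lt_s|->] := ltngtP s i.
- have Fst : F_ s t = qcomm qq (F_ i t) (F_ s i).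
    by rewrite (@Fij_split s i t) ?qi_le //; lia.
  have Fsk : F_ s k = qcomm qq (F_ i k) (F_ s i).
    by rewrite (@Fij_split s i k) ?qi_le //; lia.
  rewrite Fst qcomm_expandl -?Fst -?Fsk; last by apply: Fij_row_qcommute; try apply: Fij_sqr0; lia.
  by rewrite !(mulrBr, mulrDr) -!scalerAr !kill ?scaler0 ?subr0 //; lia.
- have Fik : F_ i k = qcomm qq (F_ s k) (F_ i s).
    by rewrite (@Fij_split i s k) ?qi_le //; lia.
  have Fit : F_ i t = qcomm qq (F_ s t) (F_ i s).
    by rewrite (@Fij_split i s t) ?qi_le //; lia.
  have row : F_ s k * F_ s t = (- qq) *: (F_ s t * F_ s k).
    by apply: Fij_row_qcommute; try apply: Fij_sqr0; lia.
  have cross : F_ s k * F_ i t = - (F_ i t * F_ s k).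
    by apply: Fij_cross_anticomm; lia.
  rewrite Fit in cross; rewrite Fik (qcomm_expandr qq_neq0 row cross) -Fik -Fit.
  by rewrite mulrDr mulrN -scalerAr !kill ?scaler0 ?oppr0 ?addr0 //; lia.
- by rewrite Fij_row_qcommute ?Fij_sqr0 -?scalerAr ?kill ?scaler0 //; lia.
Qed.

End RootVectors.

Lemma Uq_rels_annihilation_step m n (A : algType Cq) (K Kinv E F : nat -> A) :
  (1 <= m)%N -> Uq_rels m n K Kinv E F ->
  annihilation_step precb (fun r => Fij m F r.1 r.2) (I1seq m n).
Proof.
move=> m_ge1 [_ [_ [_ [_ [_ [F_odd_sqr0 [F_far [F_serre F_quartic]]]]]]]].
move=> [i k] [s t]; rewrite !mem_I1seq => ik_in st_in st_le y y_kills /=.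
apply: (Fij_annihilation_step _ _ m_ge1 F_odd_sqr0 _ ik_in st_in st_le).
- by move=> i' j' i'_range j'_range far; case: (F_far i' j' i'_range j'_range far).
- by move=> i' j' ? ? ? ?; case: (F_serre i' j') => // _ ->.
- by move=> m_ge2 n_ge2; case: (F_quartic m_ge2 n_ge2).
- by move=> s' t' st'_in; apply: (y_kills (s', t')); rewrite mem_I1seq.
Qed.

Theorem lemma5p3 (m n : nat) (hm : (1 <= m)%N) (hn : (1 <= n)%N)
  (A : algType Cq) (K Kinv E F : nat -> A) (hrel : Uq_rels m n K Kinv E F)
  (i k : nat) (hik : inI1 m n (i, k)) :
  (forall s t, inI1 m n (s, t) -> preceqb (s, t) (i, k) ->
     Fle m n F (i, k) * Fij m F s t = 0) /\
  (forall s t, inI1 m n (s, t) -> precb (s, t) (i, k) ->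
     Flt m n F (i, k) * Fij m F s t = 0).
Proof.
have ik_in : (i, k) \in I1seq m n by rewrite mem_I1seq.
have [sorted kills] := (pairwise_I1seq m n, Uq_rels_annihilation_step hm hrel).
split=> s t; rewrite -mem_I1seq => st_in st_lt.
- exact: (prod_le_annihilates precb_asym sorted kills ik_in st_in).
- exact: (prod_lt_annihilates precb_asym sorted kills ik_in st_in).
Qed.
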